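(* Let $\ell\in(\Sigma^S_{n,2d})^*$ and let $W_\ell\subseteq H_{n,d}$ be the kernel of the quadratic form $Q_\ell$. Then $\ell$ spans an extreme ray of $(\Sigma^S_{n,2d})^*$ if and only if $W_\ell^{<2>}$ is a (linear) hyperplane in $H^S_{n,2d}$.
   Context: $H_{n,d}$ is the space of real forms of degree $d$ in $n$ variables and $H^S_{n,2d}$ the symmetric forms of degree $2d$; $\Sigma^S_{n,2d}$ is the cone of symmetric sums of squares of real forms and $(\Sigma^S_{n,2d})^*=\{\ell\in (H^S_{n,2d})^*:\ell(f)\ge 0\ \forall f\in\Sigma^S_{n,2d}\}$. $\operatorname{Sym}(f)=\frac1{n!}\sum_{\sigma\in\mathcal{S}_n}\sigma(f)$ with $\mathcal{S}_n$ permuting variables. $Q_\ell(f)=\ell(\operatorname{Sym}(f^2))$ for $f\in H_{n,d}$; its kernel is $\{p\in H_{n,d}:\ell(\operatorname{Sym}(pq))=0\ \forall q\in H_{n,d}\}$. For a linear subspace $W\subseteq H_{n,d}$, $W^{<2>}=\{\operatorname{Sym}(\sum_i f_ig_i): f_i\in W,\ g_i\in H_{n,d}\}\subseteq H^S_{n,2d}$. *)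

From mathcomp Require Import all_boot all_fingroup all_algebra.
From mathcomp Require Import reals.
From mathcomp Require Import mpoly.

Set Implicit Arguments.
Unset Strict Implicit.
Unset Printing Implicit Defensive.

Import GRing.Theory Num.Theory.
Local Open Scope ring_scope.

Definition Hform (n : nat) (R : realType) (k : nat) (p : {mpoly R[n]}) : Prop :=
  p \is k.-homog.

Definition HSform (n : nat) (R : realType) (k : nat) (p : {mpoly R[n]}) : Prop :=
  p \is k.-homog /\ p \is symmetric.

Definition Sym (n : nat) (R : realType) (p : {mpoly R[n]}) : {mpoly R[n]} :=
  (n`!%:R)^-1 *: \sum_(s : 'S_n) msym s p.

Definition symSOS (n : nat) (R : realType) (d : nat) (f : {mpoly R[n]}) : Prop :=
  HSform (d.*2) f /\
  exists s : seq {mpoly R[n]},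
    (forall g, g \in s -> Hform d g) /\ f = \sum_(g <- s) g ^+ 2.

(* l is linear on the subspace S (elements of S^* are represented by
   functions on the ambient space, only their restriction to S matters). *)
Definition lin_on (n : nat) (R : realType) (S : {mpoly R[n]} -> Prop)
  (l : {mpoly R[n]} -> R) : Prop :=
  forall (a : R) p q, S p -> S q -> l (a *: p + q) = a * l p + l q.

Definition dual_symSOS (n : nat) (R : realType) (d : nat)
  (l : {mpoly R[n]} -> R) : Prop :=
  lin_on (@HSform n R d.*2) l /\ forall f, symSOS d f -> 0 <= l f.

Definition extreme_ray_dual (n : nat) (R : realType) (d : nat)
  (l : {mpoly R[n]} -> R) : Prop :=
  dual_symSOS d l /\
  (exists f, HSform d.*2 f /\ l f <> 0) /\
  forall l1 l2 : {mpoly R[n]} -> R,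
    dual_symSOS d l1 -> dual_symSOS d l2 ->
    (forall f, HSform d.*2 f -> l f = l1 f + l2 f) ->
    exists c : R, 0 <= c /\ forall f, HSform d.*2 f -> l1 f = c * l f.

(* W_l: the kernel of Q_l(f) = l(Sym(f^2)) on H_{n,d}. *)
Definition kerQ (n : nat) (R : realType) (d : nat)
  (l : {mpoly R[n]} -> R) (p : {mpoly R[n]}) : Prop :=
  Hform d p /\ forall q, Hform d q -> l (Sym (p * q)) = 0.

Definition W2 (n : nat) (R : realType) (d : nat)
  (W : {mpoly R[n]} -> Prop) (f : {mpoly R[n]}) : Prop :=
  exists (k : nat) (fs gs : 'I_k -> {mpoly R[n]}),
    (forall i, W (fs i)) /\ (forall i, Hform d (gs i)) /\
    f = Sym (\sum_(i < k) fs i * gs i).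

Definition hyperplane_in (n : nat) (R : realType)
  (S V : {mpoly R[n]} -> Prop) : Prop :=
  (forall f, V f -> S f) /\ V 0 /\
  (forall (a : R) p q, V p -> V q -> V (a *: p + q)) /\
  exists h, S h /\ ~ V h /\
    forall f, S f -> exists (c : R) w, V w /\ f = w + c *: h.

(* Q_l is positive semidefinite on H_{n,d}, and l vanishes on W_l^{<2>}.
   If l = l1 + l2 in the dual cone then Q_{l1} <= Q_l, so W_l lies in the
   kernel of Q_{l1} and l1 vanishes on W_l^{<2>}; when W_l^{<2>} is a
   hyperplane this forces l1 to be a multiple of l.  Conversely, if l is
   extreme and some symmetric w with l(w) = 0 lies outside W_l^{<2>}, take a
   functional phi vanishing on W_l^{<2>} with phi(w) = 1.  The bilinear form
   (p, q) |-> phi(Sym(pq)) vanishes on the radical of Q_l, so on the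
   finite-dimensional space H_{n,d} it is dominated by a multiple of Q_l;
   hence l +- eps phi stay in the dual cone for small eps, and splitting l
   into their halves contradicts extremality at w. *)

From Pilot Require Import Defs.
From mathcomp Require Import all_boot all_order all_fingroup all_algebra.
From mathcomp Require Import reals.
From mathcomp Require Import mpoly.
From mathcomp Require Import ring lra.
From Stdlib Require Import ClassicalEpsilon Classical.

Set Implicit Arguments.
Unset Strict Implicit.
Unset Printing Implicit Defensive.

Import GRing.Theory Num.Theory Order.TTheory.
Local Open Scope ring_scope.

(* perm.v also defines a [Sym]. *)
Local Notation Sym := Defs.Sym.

Section Subspaces.
Variables (R : realFieldType) (M : lmodType R).
Implicit Types (V W : M -> Prop) (s : seq M).

Definition subspace V := V 0 /\ forall a x y, V x -> V y -> V (a *: x + y).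

Definition linear_on V (phi : M -> R) :=
  forall a x y, V x -> V y -> phi (a *: x + y) = a * phi x + phi y.

Fixpoint in_span s x : Prop :=
  if s is v :: s' then exists t y, in_span s' y /\ x = t *: v + y else x = 0.

Lemma in_span_sum (I : Type) (r : seq I) (F : I -> R) (G : I -> M) :
  in_span (map G r) (\sum_(i <- r) F i *: G i).
Proof.
elim: r => [|i r IH] /=; first by rewrite big_nil.
by rewrite big_cons; exists (F i), (\sum_(j <- r) F j *: G j).
Qed.

Section Subspace.
Variables (V : M -> Prop) (HV : subspace V).

Lemma subspace0 : V 0. Proof. by case: HV. Qed.

Lemma subspaceZ a x : V x -> V (a *: x).
Proof. by case: HV => V0 VZ Vx; rewrite -[a *: x]addr0; apply: VZ. Qed.

Lemma subspaceD x y : V x -> V y -> V (x + y).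
Proof. by case: HV => _ VZ Vx Vy; rewrite -[x]scale1r; apply: VZ. Qed.

Lemma subspaceB x y : V x -> V y -> V (x - y).
Proof. by move=> Vx Vy; rewrite -scaleN1r addrC; case: HV => _; apply. Qed.

Lemma subspace_sum (I : Type) (r : seq I) (P : pred I) (F : I -> M) :
  (forall i, P i -> V (F i)) -> V (\sum_(i <- r | P i) F i).
Proof.
move=> VF; elim/big_rec: _ => [|i x Pi Vx]; first exact: subspace0.
exact: subspaceD (VF i Pi) Vx.
Qed.

Lemma in_span_subspace s x : {in s, forall v, V v} -> in_span s x -> V x.
Proof.
elim: s x => [|v s IH] x /= Vs; first by move->; exact: subspace0.
move=> [t [y [sy ->]]]; case: HV => _; apply; first by apply: Vs; exact: mem_head.
by apply: IH sy => u su; apply: Vs; rewrite inE su orbT.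
Qed.

Variable phi : M -> R.
Hypothesis lin_phi : linear_on V phi.

Lemma linear_on0 : phi 0 = 0.
Proof.
have := lin_phi 1 subspace0 subspace0; rewrite scale1r addr0 mul1r => h.
by apply: (addrI (phi 0)); rewrite addr0 -h.
Qed.

Lemma linear_onZ a x : V x -> phi (a *: x) = a * phi x.
Proof.
by move=> Vx; rewrite -[a *: x]addr0 lin_phi ?linear_on0 ?addr0 //; exact: subspace0.
Qed.

Lemma linear_onD x y : V x -> V y -> phi (x + y) = phi x + phi y.
Proof. by move=> Vx Vy; have := lin_phi 1 Vx Vy; rewrite scale1r mul1r. Qed.

Lemma linear_on_sum (I : Type) (r : seq I) (P : pred I) (F : I -> M) :
  (forall i, P i -> V (F i)) ->
  phi (\sum_(i <- r | P i) F i) = \sum_(i <- r | P i) phi (F i).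
Proof.
move=> VF; elim: r => [|i r IH]; first by rewrite !big_nil linear_on0.
rewrite !big_cons; case: ifP => Pi //.
by rewrite linear_onD ?IH //; [exact: VF | exact: subspace_sum].
Qed.

End Subspace.

Definition line_sum W g x := exists t, W (x - t *: g).

Lemma line_sum_subspace W g : subspace W -> subspace (line_sum W g).
Proof.
move=> [W0 WZ]; split; first by exists 0; rewrite scale0r subr0.
move=> a x y [t1 W1] [t2 W2]; exists (a * t1 + t2).
have -> : a *: x + y - (a * t1 + t2) *: g = a *: (x - t1 *: g) + (y - t2 *: g).
  by rewrite scalerDl scalerBr scalerA opprD addrACA.
exact: WZ.
Qed.

Lemma line_sum_coef_unique W g x t1 t2 : subspace W -> ~ W g ->
  W (x - t1 *: g) -> W (x - t2 *: g) -> t1 = t2.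
Proof.
move=> HW Wg W1 W2; have [//|ne12] := eqVneq t1 t2; exfalso.
have W12 : W ((t1 - t2) *: g).
  have -> : (t1 - t2) *: g = (x - t2 *: g) - (x - t1 *: g).
    by rewrite scalerBl opprB [RHS]addrC [RHS]addrA subrK.
  exact: subspaceB.
have ne0 : t1 - t2 != 0 by rewrite subr_eq0.
by apply: Wg; rewrite -[g](scale1r) -(mulVf ne0) -scalerA; exact: subspaceZ.
Qed.

Lemma subspace_extend_avoiding s W g : subspace W -> ~ W g ->
  exists W', [/\ subspace W', forall x, W x -> W' x, ~ W' g &
                 {in s, forall v, line_sum W' g v}].
Proof.
elim: s W => [|v s IH] W HW Wg; first by exists W.
have [Wv|Wv] := classic (line_sum W g v).
  have [W' [HW' WW' W'g sW']] := IH W HW Wg.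
  exists W'; split=> // u; rewrite inE => /predU1P [->|/sW'] //.
  by case: Wv => t /WW'; exists t.
have Wvg : ~ line_sum W v g.
  case=> t Wt; have [t0|tn0] := eqVneq t 0.
    by apply: Wg; rewrite -[g]subr0 -(scale0r v) -t0.
  apply: Wv; exists t^-1.
  have -> : v - t^-1 *: g = - t^-1 *: (g - t *: v).
    by rewrite scaleNr scalerBr scalerA mulVf // scale1r opprB.
  exact: subspaceZ.
have [W' [HW' WW' W'g sW']] := IH _ (line_sum_subspace v HW) Wvg.
exists W'; split=> [//||//|u]; first by move=> x Wx; apply: WW'; exists 0; rewrite scale0r subr0.
rewrite inE => /predU1P [->|/sW'] //; exists 0; rewrite scale0r subr0; apply: WW'.
by exists 1; rewrite scale1r subrr; case: HW.
Qed.

Lemma separating_functional V W s g : subspace W ->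
  (forall x, V x -> in_span s x) -> ~ W g ->
  exists phi, [/\ linear_on V phi, forall w, W w -> phi w = 0 & phi g = 1].
Proof.
move=> HW Vs Wg; have [W' [HW' WW' W'g sW']] := subspace_extend_avoiding s HW Wg.
have spanW' x : in_span s x -> line_sum W' g x.
  elim: s sW' {Vs} x => [_ x /= ->|v s IH sW' x /= [t [y [sy ->]]]].
    exact: subspace0 (line_sum_subspace g HW').
  case: (line_sum_subspace g HW') => _; apply; first by apply: sW'; exact: mem_head.
  by apply: IH sy => u su; apply: sW'; rewrite inE su orbT.
pose phi x := epsilon (inhabits (0 : R)) (fun t => W' (x - t *: g)).
have phiP x : line_sum W' g x -> W' (x - phi x *: g) := epsilon_spec _ _.
have phiE x t : W' (x - t *: g) -> phi x = t.
  by move=> Wt; apply: (line_sum_coef_unique HW' W'g _ Wt); apply: phiP; exists t.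
exists phi; split.
- move=> a x y Vx Vy; apply: phiE.
  have -> : a *: x + y - (a * phi x + phi y) *: g =
            a *: (x - phi x *: g) + (y - phi y *: g).
    by rewrite scalerDl scalerBr scalerA opprD addrACA.
  by case: HW' => _; apply; apply: phiP; apply: spanW'; apply: Vs.
- by move=> w Ww; apply: phiE; rewrite scale0r subr0; exact: WW'.
- by apply: phiE; rewrite scale1r subrr; case: HW'.
Qed.

End Subspaces.

Section Arithmetic.
Variable R : realFieldType.

Lemma quad_ge0_lincoef0 (b c : R) : 0 <= c ->
  (forall t, 0 <= 2 * t * b + t ^+ 2 * c) -> b = 0.
Proof.
move=> c0 Hq; have c1 : 0 < c + 1 by lra.
have := Hq (- b / (c + 1)).
have -> : 2 * (- b / (c + 1)) * b + (- b / (c + 1)) ^+ 2 * c =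
          - (b ^+ 2 * (c + 2)) / (c + 1) ^+ 2.
  by field; rewrite gt_eqF.
rewrite pmulr_lge0 ?invr_gt0 ?exprn_gt0 // oppr_ge0 => hb.
have b2 : b ^+ 2 <= 0 by nra.
by apply/eqP; rewrite -sqrf_eq0 eq_le b2 sqr_ge0.
Qed.

Lemma dominated_linear_step (D b P t a c : R) : 0 <= D -> 0 < b -> 0 <= P ->
  c ^+ 2 <= D * P -> (t * a + c) ^+ 2 <= (2 * D + 2 * a ^+ 2 / b) * (P + t ^+ 2 * b).
Proof.
move=> D0 b0 P0 hc.
have -> : (2 * D + 2 * a ^+ 2 / b) * (P + t ^+ 2 * b) =
          2 * (D * P) + 2 * D * (t ^+ 2 * b) + 2 * (a ^+ 2 / b * P) + 2 * (t * a) ^+ 2.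
  by field; rewrite gt_eqF.
have tb : 0 <= t ^+ 2 * b by rewrite mulr_ge0 ?sqr_ge0 ?ltW.
have e1 : 0 <= D * (t ^+ 2 * b) by rewrite mulr_ge0.
have e2 : 0 <= a ^+ 2 / b * P by rewrite mulr_ge0 // divr_ge0 ?sqr_ge0 ?ltW.
have := sqr_ge0 (t * a - c); nra.
Qed.

Lemma dominated_quadratic_step (C D b P t f g w : R) :
  0 <= C -> 0 <= D -> 0 < b -> 0 <= P -> f <= C * P -> g ^+ 2 <= D * P ->
  f + 2 * t * g + t ^+ 2 * w <= (C + (D + `|w|) / b + 1) * (P + t ^+ 2 * b).
Proof.
move=> C0 D0 b0 P0 hf hg.
have cross : 2 * t * g <= t ^+ 2 * b + D / b * P.
  have : 0 <= (t * b - g) ^+ 2 / b by rewrite divr_ge0 ?sqr_ge0 ?ltW.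
  have -> : (t * b - g) ^+ 2 / b = t ^+ 2 * b - 2 * t * g + g ^+ 2 / b.
    by field; rewrite gt_eqF.
  have : g ^+ 2 / b <= D / b * P by rewrite [D / b * P]mulrAC ler_pM2r ?invr_gt0.
  lra.
have diag : t ^+ 2 * w <= `|w| / b * (t ^+ 2 * b).
  have -> : `|w| / b * (t ^+ 2 * b) = t ^+ 2 * `|w| by field; rewrite gt_eqF.
  by rewrite ler_wpM2l ?sqr_ge0 ?ler_norm.
have tb : 0 <= t ^+ 2 * b by rewrite mulr_ge0 ?sqr_ge0 ?ltW.
have e1 : 0 <= C * (t ^+ 2 * b) by rewrite mulr_ge0.
have e2 : 0 <= D / b * (t ^+ 2 * b) by rewrite mulr_ge0 // divr_ge0 // ltW.
have e3 : 0 <= `|w| / b * P by rewrite mulr_ge0 // divr_ge0 // ltW.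
have -> : (C + (D + `|w|) / b + 1) * (P + t ^+ 2 * b) =
  C * P + D / b * P + `|w| / b * P + P + C * (t ^+ 2 * b) + D / b * (t ^+ 2 * b)
  + `|w| / b * (t ^+ 2 * b) + t ^+ 2 * b by ring.
lra.
Qed.

End Arithmetic.

Section PositiveSemidefinite.
Variables (R : realFieldType) (M : lmodType R) (V : M -> Prop).

Definition symmetric_bilinear_on (B : M -> M -> R) :=
  (forall a x y z, V x -> V y -> V z -> B (a *: x + y) z = a * B x z + B y z) /\
  (forall x y, V x -> V y -> B x y = B y x).

Hypothesis HV : subspace V.

Section Bilinear.
Variables (B : M -> M -> R) (HB : symmetric_bilinear_on B).

Lemma bilinear_on_linear_l z : V z -> linear_on V (B ^~ z).
Proof. by move=> Vz a x y Vx Vy; case: HB => Bl _; exact: Bl. Qed.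

Lemma bilinear_on_linear_r z : V z -> linear_on V (B z).
Proof.
move=> Vz a x y Vx Vy; have [Bl Bs] := HB.
have Vxy : V (a *: x + y) by case: HV => _; apply.
by rewrite Bs // Bl // (Bs x) // (Bs y).
Qed.

Lemma bilinear_on_sqr t x y : V x -> V y ->
  B (t *: y + x) (t *: y + x) = B x x + 2 * t * B x y + t ^+ 2 * B y y.
Proof.
move=> Vx Vy; have Vtyx : V (t *: y + x) by case: HV => _; apply.
rewrite (bilinear_on_linear_l Vtyx) // (bilinear_on_linear_r Vy) //.
rewrite (bilinear_on_linear_r Vx) //.
by case: HB => _ Bs; rewrite (Bs y x) //; ring.
Qed.

Lemma bilinear_on_sqr_orth t x y : V x -> V y -> B x y = 0 -> B y y = 0 ->
  B (t *: y + x) (t *: y + x) = B x x.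
Proof. by move=> Vx Vy Bxy Byy; rewrite bilinear_on_sqr // Bxy Byy !mulr0 !addr0. Qed.

End Bilinear.

Variables (B : M -> M -> R) (HB : symmetric_bilinear_on B).

Definition psd_on := forall x, V x -> 0 <= B x x.

Hypothesis HP : psd_on.

Lemma psd_isotropic_orth p q : V p -> V q -> B p p = 0 -> B p q = 0.
Proof.
move=> Vp Vq Bpp; apply: (quad_ge0_lincoef0 (HP Vq)) => t.
by have := HP (HV.2 t _ _ Vq Vp); rewrite bilinear_on_sqr // Bpp add0r.
Qed.

Definition orthproj v x := x - (B x v / B v v) *: v.

Lemma orthproj_decomp v x : x = (B x v / B v v) *: v + orthproj v x.
Proof. by rewrite /orthproj addrC subrK. Qed.

Lemma orthproj_in v x : V v -> V x -> V (orthproj v x).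
Proof. by move=> Vv Vx; rewrite /orthproj addrC -scaleNr; case: HV => _; apply. Qed.

Lemma orthproj_orth v x : V v -> V x -> B v v != 0 -> B (orthproj v x) v = 0.
Proof.
move=> Vv Vx nv; rewrite /orthproj addrC -scaleNr (bilinear_on_linear_l HB) //.
by rewrite mulNr divfK // addNr.
Qed.

Lemma orthproj_sqr v x : V v -> V x -> B v v != 0 ->
  B x x = B (orthproj v x) (orthproj v x) + (B x v / B v v) ^+ 2 * B v v.
Proof.
move=> Vv Vx nv; have Vpx := orthproj_in Vv Vx.
by rewrite {1 2}(orthproj_decomp v x) bilinear_on_sqr // orthproj_orth // mulr0 addr0.
Qed.

Lemma orthproj_self v : B v v != 0 -> orthproj v v = 0.
Proof. by move=> nv; rewrite /orthproj divff // scale1r subrr. Qed.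

Lemma orthproj_lin v a x y : V v -> V x -> V y ->
  orthproj v (a *: x + y) = a *: orthproj v x + orthproj v y.
Proof.
move=> Vv Vx Vy; rewrite /orthproj (bilinear_on_linear_l HB) // mulrDl scalerDl.
by rewrite scalerBr scalerA mulrA opprD addrACA.
Qed.

Lemma in_span_orthproj v s x : V v -> B v v != 0 -> {in s, forall u, V u} ->
  in_span (v :: s) x -> in_span (map (orthproj v) s) (orthproj v x).
Proof.
move=> Vv nv Vs [t [y [sy ->]]].
have Vy := in_span_subspace HV Vs sy.
rewrite orthproj_lin // orthproj_self // scaler0 add0r {Vy}.
elim: s Vs y sy => [_ y /= ->|u s IH Vs y /= [r [z [sz ->]]]].
  by rewrite /orthproj (linear_on0 HV (bilinear_on_linear_l HB Vv)) mul0r scale0r subr0.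
have Vs' : {in s, forall w, V w} by move=> w sw; apply: Vs; rewrite inE sw orbT.
exists r, (orthproj v z); split; first exact: IH.
by rewrite orthproj_lin //; [apply: Vs; exact: mem_head | exact: in_span_subspace sz].
Qed.

Lemma psd_isotropic_orth_l p q : V p -> V q -> B p p = 0 -> B q p = 0.
Proof. by move=> Vp Vq Bpp; case: HB => _ Bs; rewrite Bs //; exact: psd_isotropic_orth. Qed.

(* Induction on the spanning list: its head v is either isotropic, hence in
   the radical of every form involved, or it is split off by projecting the
   rest of the list B-orthogonally to v. *)
Lemma linear_dominated phi : linear_on V phi ->
  (forall p, V p -> B p p = 0 -> phi p = 0) ->
  forall s, {in s, forall v, V v} ->
  exists2 D, 0 <= D & forall x, in_span s x -> phi x ^+ 2 <= D * B x x.
Proof.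
move=> lin_phi phi_iso s; have [k] := ubnP (size s).
elim: k s => // k IH [_ _|v s /= ltsk Vs].
  by exists 0 => // x ->; rewrite (linear_on0 HV lin_phi) expr0n mul0r.
have Vv : V v by apply: Vs; exact: mem_head.
have Vs' : {in s, forall u, V u} by move=> u su; apply: Vs; rewrite inE su orbT.
have [Bvv0|nv] := eqVneq (B v v) 0.
  have [D D0 HD] := IH s ltsk Vs'; exists D => // x [t [y [sy ->]]].
  have Vy := in_span_subspace HV Vs' sy.
  rewrite (bilinear_on_sqr_orth HB t Vy Vv (psd_isotropic_orth_l Vv Vy Bvv0) Bvv0).
  by rewrite lin_phi // phi_iso // mulr0 add0r; exact: HD.
have bv : 0 < B v v by rewrite lt_def nv HP.
have Vps : {in map (orthproj v) s, forall u, V u}.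
  by move=> u /mapP [w sw ->]; apply: orthproj_in => //; exact: Vs'.
have [D D0 HD] := IH (map (orthproj v) s) ltac:(by rewrite size_map) Vps.
exists (2 * D + 2 * phi v ^+ 2 / B v v).
  have : 0 <= phi v ^+ 2 / B v v by rewrite divr_ge0 ?sqr_ge0 // ltW.
  lra.
move=> x sx; have Vx := in_span_subspace HV Vs sx; have Vpx := orthproj_in Vv Vx.
rewrite (orthproj_sqr Vv Vx nv) {1}(orthproj_decomp v x) lin_phi //.
have sx' := in_span_orthproj Vv nv Vs' sx.
by apply: dominated_linear_step => //; [exact: HP | exact: HD].
Qed.

Lemma quadratic_dominated B' : symmetric_bilinear_on B' ->
  (forall p q, V p -> V q -> B p p = 0 -> B' p q = 0) ->
  forall s, {in s, forall v, V v} ->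
  exists2 C, 0 <= C & forall x, in_span s x -> B' x x <= C * B x x.
Proof.
move=> HB' B'_iso s; have [k] := ubnP (size s).
elim: k s => // k IH [_ _|v s /= ltsk Vs].
  exists 0 => // x ->; rewrite mul0r.
  by rewrite (linear_on0 HV (bilinear_on_linear_l HB' (subspace0 HV))).
have Vv : V v by apply: Vs; exact: mem_head.
have Vs' : {in s, forall u, V u} by move=> u su; apply: Vs; rewrite inE su orbT.
have [Bvv0|nv] := eqVneq (B v v) 0.
  have [C C0 HC] := IH s ltsk Vs'; exists C => // x [t [y [sy ->]]].
  have Vy := in_span_subspace HV Vs' sy.
  have B'yv : B' y v = 0 by case: HB' => _ Bs; rewrite Bs //; exact: B'_iso.
  rewrite (bilinear_on_sqr_orth HB t Vy Vv (psd_isotropic_orth_l Vv Vy Bvv0) Bvv0).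
  by rewrite (bilinear_on_sqr_orth HB' t Vy Vv B'yv (B'_iso _ _ Vv Vv Bvv0)); exact: HC.
have bv : 0 < B v v by rewrite lt_def nv HP.
have Vps : {in map (orthproj v) s, forall u, V u}.
  by move=> u /mapP [w sw ->]; apply: orthproj_in => //; exact: Vs'.
have [C C0 HC] := IH (map (orthproj v) s) ltac:(by rewrite size_map) Vps.
have [D D0 HD] := linear_dominated (bilinear_on_linear_l HB' Vv)
  (fun p Vp Bpp => B'_iso p v Vp Vv Bpp) Vps.
exists (C + (D + `|B' v v|) / B v v + 1).
  have : 0 <= (D + `|B' v v|) / B v v by rewrite divr_ge0 ?addr_ge0 // ltW.
  lra.
move=> x sx; have Vx := in_span_subspace HV Vs sx; have Vpx := orthproj_in Vv Vx.
have sx' := in_span_orthproj Vv nv Vs' sx.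
rewrite (orthproj_sqr Vv Vx nv) {1 2}(orthproj_decomp v x) (bilinear_on_sqr HB') //.
by apply: dominated_quadratic_step => //; [exact: HP | exact: HC | exact: HD].
Qed.

Lemma abs_quadratic_dominated B' : symmetric_bilinear_on B' ->
  (forall p q, V p -> V q -> B p p = 0 -> B' p q = 0) ->
  forall s, {in s, forall v, V v} ->
  exists2 C, 0 <= C & forall x, in_span s x -> `|B' x x| <= C * B x x.
Proof.
move=> [B'l B's] B'_iso s Vs.
have [C1 C10 HC1] := quadratic_dominated (conj B'l B's) B'_iso Vs.
have HB'N : symmetric_bilinear_on (fun x y => - B' x y).
  by split=> [a x y z Vx Vy Vz|x y Vx Vy]; [rewrite B'l //; ring | rewrite B's].
have B'N_iso p q : V p -> V q -> B p p = 0 -> - B' p q = 0.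
  by move=> Vp Vq Bpp; rewrite (B'_iso _ _ Vp Vq Bpp) oppr0.
have [C2 C20 HC2] := quadratic_dominated HB'N B'N_iso Vs.
exists (C1 + C2); first exact: addr_ge0.
move=> x sx; have Bxx := HP (in_span_subspace HV Vs sx).
have := HC1 x sx; have := HC2 x sx; rewrite ler_norml mulrDl.
have := mulr_ge0 C10 Bxx; have := mulr_ge0 C20 Bxx; lra.
Qed.

End PositiveSemidefinite.

Section SymmetricForms.
Variables (n : nat) (R : realType).
Local Notation P := {mpoly R[n]}.

Lemma msym_homog k s (p : P) : p \is k.-homog -> msym s p \is k.-homog.
Proof.
move/dhomogP => H; apply/dhomogP => m.
by rewrite mcoeff_msupp mcoeff_sym -mcoeff_msupp => /H <-; exact/esym/mdeg_mperm.
Qed.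

Lemma SymZD a (p q : P) : Sym (a *: p + q) = a *: Sym p + Sym q.
Proof.
rewrite /Defs.Sym; under eq_bigr do rewrite msymD msymZ.
by rewrite big_split /= -scaler_sumr scalerDr !scalerA mulrC.
Qed.

Lemma Sym0 : Sym (0 : P) = 0.
Proof. by rewrite /Defs.Sym big1 ?scaler0 // => s _; rewrite msym0. Qed.

Lemma SymD (p q : P) : Sym (p + q) = Sym p + Sym q.
Proof. by have := SymZD 1 p q; rewrite !scale1r. Qed.

Lemma SymZ a (p : P) : Sym (a *: p) = a *: Sym p.
Proof. by rewrite -[a *: p]addr0 SymZD Sym0 addr0. Qed.

Lemma Sym_sum (I : Type) (r : seq I) (Q : pred I) (F : I -> P) :
  Sym (\sum_(i <- r | Q i) F i) = \sum_(i <- r | Q i) Sym (F i).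
Proof. by elim/big_rec2: _ => [|i y1 y2 _ <-]; [exact: Sym0 | exact: SymD]. Qed.

Lemma Sym_homog k (p : P) : p \is k.-homog -> Sym p \is k.-homog.
Proof. by move=> H; apply/rpredZ/rpred_sum => s _; exact: msym_homog. Qed.

Lemma Sym_symmetric (p : P) : Sym p \is symmetric.
Proof.
apply/issymP => t; rewrite /Defs.Sym msymZ; congr (_ *: _).
rewrite (big_morph _ (@msymD _ _ t) (@msym0 _ _ t)).
under eq_bigr do rewrite -msymMm.
by rewrite [RHS](reindex_inj (mulIg t)).
Qed.

Lemma Sym_id (p : P) : p \is symmetric -> Sym p = p.
Proof.
move/issymP => H; rewrite /Defs.Sym (eq_bigr (fun _ => p)) //.
rewrite sumr_const card_Sn -scaler_nat scalerA mulVf ?scale1r //.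
by rewrite pnatr_eq0 -lt0n fact_gt0.
Qed.

Lemma Hform_subspace k : subspace (@Hform n R k).
Proof. by split=> [|a x y Hx Hy]; [exact: dhomog0 | rewrite /Hform rpredD ?rpredZ]. Qed.

Lemma HSform_subspace k : subspace (@HSform n R k).
Proof.
split=> [|a x y [Hx Sx] [Hy Sy]]; first by split; [exact: dhomog0 | exact: rpred0].
by split; rewrite rpredD ?rpredZ.
Qed.

Lemma Sym_HSform k (p : P) : Hform k p -> HSform k (Sym p).
Proof. by move=> H; split; [exact: Sym_homog | exact: Sym_symmetric]. Qed.

Lemma SymM_HSform d (p q : P) : Hform d p -> Hform d q -> HSform d.*2 (Sym (p * q)).
Proof. by move=> Hp Hq; apply: Sym_HSform; rewrite /Hform -addnn; apply: dhomogM. Qed.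

Definition monomials k : seq 'X_{1..n} :=
  [seq s2m t | t : k.-tuple 'I_n <- enum (basis n k)].

Lemma homog_expand k (p : P) : p \is k.-homog ->
  p = \sum_(m <- monomials k) p@_m *: 'X_[m].
Proof.
move=> Hp; apply/mpolyP => m; rewrite raddf_sum /=.
have [km|km] := boolP (m \in monomials k).
  rewrite (bigD1_seq m) ?uniq_basis //= mcoeffZ mcoeffX eqxx mulr1 big1 ?addr0 //.
  by move=> m' ne; rewrite mcoeffZ mcoeffX (negbTE ne) mulr0.
rewrite big_seq big1 /=; first by apply: (dhomog_nemf_coeff Hp); rewrite /= basis_cover.
move=> m' km'; rewrite mcoeffZ mcoeffX; case: eqP => [e|_]; last by rewrite mulr0.
by rewrite -e km' in km.
Qed.

Lemma homog_in_span k (p : P) : p \is k.-homog ->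
  in_span [seq 'X_[m] | m <- monomials k] p.
Proof. by move=> Hp; rewrite (homog_expand Hp); exact: in_span_sum. Qed.

Lemma monomials_Hform k : {in [seq 'X_[m] | m <- monomials k], forall v : P, Hform k v}.
Proof. by move=> v /mapP [m km ->]; rewrite /Hform dhomogX /= basis_cover. Qed.

Lemma mdeg_s2m (t : seq 'I_n) : mdeg (s2m t) = size t.
Proof.
rewrite mdegE (eq_bigr (fun i => count_mem i t)); last by move=> i _; rewrite mnmE.
transitivity (\sum_i \sum_(j <- t | j == i) 1)%N.
  by apply: eq_bigr => i _; rewrite -big_filter sum1_size size_filter.
rewrite (exchange_big_dep predT) //= -[RHS]sum1_size.
by apply: eq_bigr => i _; rewrite (eq_bigl _ _ (eq_sym _)) big_pred1_eq.
Qed.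

Lemma s2m_cat (a b : seq 'I_n) : s2m (a ++ b) = (s2m a + s2m b)%MM.
Proof. by apply/mnmP => i; rewrite mnmDE !mnmE count_cat. Qed.

(* [m2s m] lists the variables of [m] with multiplicity; cutting it after [d]
   entries factors a monomial of degree [2d] into two of degree [d]. *)
Definition mhead d (m : 'X_{1..n}) := s2m (take d (m2s m)).
Definition mtail d (m : 'X_{1..n}) := s2m (drop d (m2s m)).

Lemma mhead_mtail d m : mdeg m = d.*2 ->
  [/\ (mhead d m + mtail d m)%MM = m, mdeg (mhead d m) = d & mdeg (mtail d m) = d].
Proof.
move=> md; have sm : size (m2s m) = d.*2 by rewrite size_m2s.
split; first by rewrite -s2m_cat cat_take_drop s2mK.
  by rewrite mdeg_s2m size_takel // sm -addnn leq_addr.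
by rewrite mdeg_s2m size_drop sm -addnn addnK.
Qed.

Lemma HSform_Sym_sum_mul d (f : P) : HSform d.*2 f ->
  exists k (fs gs : 'I_k -> P), [/\ forall i, Hform d (fs i),
    forall i, Hform d (gs i) & f = Sym (\sum_(i < k) fs i * gs i)].
Proof.
move=> [Hf Sf]; pose ms := monomials d.*2.
have msd (i : 'I_(size ms)) : mdeg (nth 0%MM ms i) = d.*2.
  by apply/eqP; rewrite basis_cover mem_nth.
exists (size ms), (fun i => f@_(nth 0%MM ms i) *: 'X_[mhead d (nth 0%MM ms i)]),
  (fun i => 'X_[mtail d (nth 0%MM ms i)]).
split=> [i|i|].
- by case: (mhead_mtail (msd i)) => _ hd _; rewrite /Hform rpredZ // dhomogX /= hd.
- by case: (mhead_mtail (msd i)) => _ _ tl; rewrite /Hform dhomogX /= tl.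
rewrite -{1}(Sym_id Sf) {1}(homog_expand Hf) (big_nth 0%MM) big_mkord.
congr Sym; apply: eq_bigr => i _; case: (mhead_mtail (msd i)) => e _ _.
by rewrite -scalerAl -mpolyXD e.
Qed.

End SymmetricForms.

Section Hyperplanes.
Variables (n : nat) (R : realType) (S V : {mpoly R[n]} -> Prop).

Lemma hyperplane_in_kernel (lam : {mpoly R[n]} -> R) h :
  subspace S -> subspace V -> (forall f, V f -> S f) -> lin_on S lam ->
  (forall f, V f -> lam f = 0) -> (forall f, S f -> lam f = 0 -> V f) ->
  S h -> lam h <> 0 -> hyperplane_in S V.
Proof.
move=> HS [V0 VZ] VS lin_lam Vlam kerV Sh lh.
split=> //; split=> //; split=> //; exists h; split=> //; split; first by move/Vlam.
move=> f Sf; exists (lam f / lam h), (f - (lam f / lam h) *: h); split; last by rewrite subrK.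
have Sw : S (f - (lam f / lam h) *: h) by apply: subspaceB => //; exact: subspaceZ.
apply: kerV => //; rewrite addrC -scaleNr lin_lam // mulNr divfK ?addNr //; exact/eqP.
Qed.

Lemma hyperplane_in_proportional (lam mu : {mpoly R[n]} -> R) :
  hyperplane_in S V -> lin_on S lam -> lin_on S mu ->
  (forall f, V f -> lam f = 0) -> (forall f, V f -> mu f = 0) ->
  (exists f0, S f0 /\ mu f0 <> 0) ->
  exists c, forall f, S f -> lam f = c * mu f.
Proof.
move=> [VS [_ [_ [h [Sh [_ Hdec]]]]]] lin_lam lin_mu Vlam Vmu [f0 [Sf0 mf0]].
have dec f : S f -> exists c, lam f = c * lam h /\ mu f = c * mu h.
  move=> Sf; have [c [w [Vw ->]]] := Hdec f Sf; exists c.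
  have Sw := VS w Vw.
  by rewrite !(addrC w) (lin_lam c h w) // (lin_mu c h w) // (Vlam w Vw) (Vmu w Vw) !addr0.
have mh : mu h != 0.
  by apply/eqP => mh; apply: mf0; have [c [_ ->]] := dec f0 Sf0; rewrite mh mulr0.
exists (lam h / mu h) => f Sf; have [c [-> ->]] := dec f Sf; by field.
Qed.

End Hyperplanes.

Section DualCone.
Variables (n : nat) (R : realType) (d : nat).
Local Notation P := {mpoly R[n]}.
Local Notation Hd := (@Hform n R d).
Local Notation HS2d := (@HSform n R d.*2).
Local Notation HS2d_subspace := (@HSform_subspace n R d.*2).
Local Notation Hd_subspace := (@Hform_subspace n R d).

Definition Qform (l : P -> R) (p q : P) := l (Sym (p * q)).

Lemma Qform_bilinear l : lin_on HS2d l -> symmetric_bilinear_on Hd (Qform l).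
Proof.
move=> lin_l; split=> [a x y z Hx Hy Hz|x y _ _]; last by rewrite /Qform mulrC.
by rewrite /Qform mulrDl -scalerAl SymZD lin_l //; exact: SymM_HSform.
Qed.

Lemma symSOS_Sym_sqr x : Hd x -> symSOS d (n`!%:R *: Sym (x * x)).
Proof.
move=> Hx; split; first exact: (subspaceZ HS2d_subspace _ (SymM_HSform Hx Hx)).
exists [seq msym s x | s <- enum 'S_n]; split.
  by move=> g /mapP [s _ ->]; exact: msym_homog.
rewrite big_map big_enum /= /Defs.Sym scalerA divff ?scale1r ?pnatr_eq0 -?lt0n ?fact_gt0 //.
by apply: eq_bigr => s _; rewrite msymM expr2.
Qed.

Lemma dual_symSOS_psd l :
  dual_symSOS d l <-> lin_on HS2d l /\ psd_on Hd (Qform l).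
Proof.
split=> [[lin_l l_ge0]|[lin_l l_psd]].
  split=> // x Hx; have := l_ge0 _ (symSOS_Sym_sqr Hx).
  rewrite (linear_onZ HS2d_subspace lin_l _ (SymM_HSform Hx Hx)).
  by rewrite pmulr_rge0 // ltr0n fact_gt0.
split=> // f [[Hf Sf] [s [Hs Ef]]].
rewrite -(Sym_id Sf) Ef Sym_sum big_seq (linear_on_sum HS2d_subspace lin_l).
  by apply: sumr_ge0 => g gs; rewrite expr2; exact: (l_psd _ (Hs g gs)).
by move=> g gs; rewrite expr2; exact: SymM_HSform (Hs g gs) (Hs g gs).
Qed.

Lemma dual_symSOS_scale (c : R) (l : P -> R) : 0 <= c -> dual_symSOS d l ->
  dual_symSOS d (fun f => c * l f).
Proof.
move=> c0 [lin_l l_ge0]; split=> [a x y Hx Hy|f Hf]; last by rewrite mulr_ge0 ?l_ge0.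
by rewrite lin_l //; ring.
Qed.

Section W2.
Variable W : P -> Prop.

Lemma W2_subspace : subspace (W2 d W).
Proof.
split.
  exists 0%N, (fun _ => 0), (fun _ => 0).
  by split; [case | split; [case | rewrite big_ord0 Sym0]].
move=> a _ _ [k1 [f1 [g1 [Wf1 [Hg1 ->]]]]] [k2 [f2 [g2 [Wf2 [Hg2 ->]]]]].
exists (k1 + k2)%N, (fun i => match split i with inl j => f1 j | inr j => f2 j end),
  (fun i => match split i with inl j => a *: g1 j | inr j => g2 j end).
split=> [i|]; first by case: (split i).
split=> [i|].
  by case: (split i) => j; [exact/rpredZ/Hg1 | exact: Hg2].
rewrite -SymZ -SymD big_split_ord scaler_sumr; congr (Sym (_ + _)); apply: eq_bigr => j _.
  by rewrite (unsplitK (inl j) : split (lshift k2 j) = inl j) scalerAr.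
by rewrite (unsplitK (inr j) : split (rshift k1 j) = inr j).
Qed.

Lemma W2_mul p q : W p -> Hd q -> W2 d W (Sym (p * q)).
Proof. by move=> Wp Hq; exists 1%N, (fun=> p), (fun=> q); rewrite big_ord1. Qed.

Hypothesis W_Hd : forall p, W p -> Hd p.

Lemma W2_HSform f : W2 d W f -> HS2d f.
Proof.
move=> [k [fs [gs [Wfs [Hgs ->]]]]]; apply: Sym_HSform; rewrite /Hform -addnn.
by apply: rpred_sum => i _; apply: dhomogM; [exact: W_Hd | exact: Hgs].
Qed.

Lemma W2_eq0 phi : lin_on HS2d phi ->
  (forall p q, W p -> Hd q -> phi (Sym (p * q)) = 0) ->
  forall f, W2 d W f -> phi f = 0.
Proof.
move=> lin_phi phi0 f [k [fs [gs [Wfs [Hgs ->]]]]].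
rewrite Sym_sum (linear_on_sum HS2d_subspace lin_phi).
  by rewrite big1 // => i _; apply: phi0.
by move=> i _; apply: SymM_HSform; [exact: W_Hd | exact: Hgs].
Qed.

End W2.

Lemma HSform_W2 (W : P -> Prop) : (forall p, Hd p -> W p) ->
  forall f, HS2d f -> W2 d W f.
Proof.
move=> Hd_W f /HSform_Sym_sum_mul [k [fs [gs [Hfs Hgs Ef]]]].
by exists k, fs, gs; split=> [i|]; [exact/Hd_W/Hfs | split].
Qed.

Lemma kerQ_W2_eq0 l : lin_on HS2d l -> forall f, W2 d (kerQ d l) f -> l f = 0.
Proof.
move=> lin_l; apply: (W2_eq0 (fun p (kp : kerQ d l p) => kp.1) lin_l).
by move=> p q kp; apply: kp.2.
Qed.

Lemma kerQ_isotropic l p : dual_symSOS d l -> Hd p -> l (Sym (p * p)) = 0 ->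
  kerQ d l p.
Proof.
move=> /dual_symSOS_psd [lin_l l_psd] Hp Qp; split=> // q Hq.
exact: (psd_isotropic_orth Hd_subspace (Qform_bilinear lin_l) l_psd Hp Hq Qp).
Qed.

Lemma dual_symSOS_perturb l phi : dual_symSOS d l -> lin_on HS2d phi ->
  (forall f, W2 d (kerQ d l) f -> phi f = 0) ->
  exists2 e, 0 < e & forall t, `|t| <= e -> dual_symSOS d (fun f => l f + t * phi f).
Proof.
move=> Hl lin_phi phiW; have [lin_l l_psd] := (dual_symSOS_psd l).1 Hl.
have phi_iso p q : Hd p -> Hd q -> Qform l p p = 0 -> Qform phi p q = 0.
  by move=> Hp Hq Qp; apply/phiW/W2_mul => //; exact: kerQ_isotropic.
have [C C0 HC] := abs_quadratic_dominated Hd_subspace (Qform_bilinear lin_l) l_psd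
  (Qform_bilinear lin_phi) phi_iso (@monomials_Hform n R d).
have C1 : 0 < C + 1 by lra.
exists (C + 1)^-1; first by rewrite invr_gt0.
move=> t tC; apply/dual_symSOS_psd; split.
  by move=> a x y Hx Hy; rewrite lin_l // lin_phi //; ring.
move=> x Hx; have := HC x (homog_in_span Hx); have := l_psd x Hx; rewrite /Qform.
set Q := l _; set F := phi _ => Q0 FQ.
have CC1 : (C + 1)^-1 * C <= 1 by rewrite mulrC ler_pdivrMr // mul1r; lra.
have : `|t * F| <= Q.
  rewrite normrM; apply: le_trans (ler_pM (normr_ge0 _) (normr_ge0 _) tC FQ) _.
  by rewrite mulrA -[leRHS]mul1r ler_wpM2r.
by rewrite ler_norml => /andP [+ _]; lra.
Qed.

Lemma extreme_ray_kernel_W2 l : extreme_ray_dual d l ->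
  forall w, HS2d w -> l w = 0 -> W2 d (kerQ d l) w.
Proof.
move=> [Hl [_ ext]] w Hw lw; apply: NNPP => W2w.
have [phi [lin_phi phiW phiw]] := separating_functional (W2_subspace (kerQ d l))
  (fun x (Hx : HS2d x) => homog_in_span Hx.1) W2w.
have [e e0 He] := dual_symSOS_perturb Hl lin_phi phiW.
have half0 : 0 <= 2^-1 :> R by rewrite invr_ge0 ler0n.
pose l1 f := 2^-1 * (l f + e * phi f); pose l2 f := 2^-1 * (l f + - e * phi f).
have ee : `|e| <= e by rewrite ger0_norm // ltW.
have Hl1 : dual_symSOS d l1 := dual_symSOS_scale half0 (He e ee).
have Hl2 : dual_symSOS d l2.
  by apply: dual_symSOS_scale half0 (He (- e) _); rewrite normrN.
have l12 f : HS2d f -> l f = l1 f + l2 f by move=> _; rewrite /l1 /l2; field.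
have [c [_ Hc]] := ext l1 l2 Hl1 Hl2 l12.
have := Hc w Hw; rewrite /l1 lw phiw mulr0 add0r mulr1 => /eqP.
by rewrite mulf_eq0 invr_eq0 pnatr_eq0 (gt_eqF e0).
Qed.

Lemma extreme_ray_hyperplane l : extreme_ray_dual d l ->
  hyperplane_in HS2d (W2 d (kerQ d l)).
Proof.
move=> ext; have [[lin_l _] [[f0 [Hf0 lf0]] _]] := ext.
apply: (hyperplane_in_kernel HS2d_subspace (W2_subspace _) _ lin_l _ _ Hf0 lf0).
- exact: (W2_HSform (fun p (kp : kerQ d l p) => kp.1)).
- exact: (kerQ_W2_eq0 lin_l).
- exact: (extreme_ray_kernel_W2 ext).
Qed.

Lemma dual_summand_W2_eq0 l l1 l2 : dual_symSOS d l1 -> dual_symSOS d l2 ->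
  (forall f, HS2d f -> l f = l1 f + l2 f) ->
  forall f, W2 d (kerQ d l) f -> l1 f = 0.
Proof.
move=> Hl1 Hl2 l12; have [lin1 psd1] := (dual_symSOS_psd l1).1 Hl1.
have [_ psd2] := (dual_symSOS_psd l2).1 Hl2.
apply: (W2_eq0 (fun p (kp : kerQ d l p) => kp.1) lin1) => p q [Hp kp] Hq.
have Q1 : Qform l1 p p = 0.
  have := psd2 p Hp; have := psd1 p Hp; rewrite /Qform.
  by have := l12 _ (SymM_HSform Hp Hp); rewrite kp //; lra.
exact: (psd_isotropic_orth Hd_subspace (Qform_bilinear lin1) psd1 Hp Hq Q1).
Qed.

Lemma hyperplane_Qform_pos l : dual_symSOS d l ->
  hyperplane_in HS2d (W2 d (kerQ d l)) -> exists2 x, Hd x & 0 < l (Sym (x * x)).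
Proof.
move=> Hl [_ [_ [_ [h [Hh [W2h _]]]]]]; apply: NNPP => noQ; apply: W2h.
apply: HSform_W2 Hh => p Hp; apply: kerQ_isotropic => //.
have [_ /(_ p Hp) Q0] := (dual_symSOS_psd l).1 Hl; rewrite /Qform in Q0.
apply/eqP; rewrite eq_le Q0 andbT leNgt; apply/negP => Qp; apply: noQ; by exists p.
Qed.

Lemma hyperplane_extreme_ray l : dual_symSOS d l ->
  hyperplane_in HS2d (W2 d (kerQ d l)) -> extreme_ray_dual d l.
Proof.
move=> Hl hyp; have [x Hx Qx] := hyperplane_Qform_pos Hl hyp.
have Sxx := SymM_HSform Hx Hx; have lxx : l (Sym (x * x)) <> 0 by apply/eqP; rewrite gt_eqF.
split=> //; split=> [|l1 l2 Hl1 Hl2 l12]; first by exists (Sym (x * x)).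
have [c Hc] := hyperplane_in_proportional hyp Hl1.1 Hl.1
  (dual_summand_W2_eq0 Hl1 Hl2 l12) (kerQ_W2_eq0 Hl.1) (ex_intro _ _ (conj Sxx lxx)).
exists c; split=> //; have [_ /(_ x Hx)] := (dual_symSOS_psd l1).1 Hl1.
by rewrite /Qform Hc // pmulr_lge0.
Qed.

End DualCone.

Theorem corollary6p6 (n : nat) (R : realType) (d : nat)
  (l : {mpoly R[n]} -> R) :
  dual_symSOS d l ->
  (extreme_ray_dual d l <->
   hyperplane_in (@HSform n R d.*2) (W2 d (kerQ d l))).
Proof.
by move=> Hl; split; [exact: extreme_ray_hyperplane | exact: hyperplane_extreme_ray].
Qed.
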